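(* Let $r \in \mathbb{Z}_{\geqslant 2}$. For any real number $x \geqslant 1$, $$\sum_{n_1 \leqslant x, \dotsc, n_r \leqslant x} \mu \left( n_1 \dotsb n_r \right) \left \lfloor \frac{x}{n_1 \dotsb n_r} \right \rfloor = \sum_{n \leqslant x} (1-r)^{\omega(n)},$$ where the sum on the left runs over all $r$-tuples of positive integers $n_1,\dots,n_r \leqslant x$.
   Context: $\mu$ is the Möbius function, $\omega(n)$ is the number of distinct prime factors of $n$ (with $\omega(1)=0$), and $\lfloor \cdot \rfloor$ is the integer part. *)

From mathcomp Require Import all_boot all_order all_algebra.
Set Implicit Arguments. Unset Strict Implicit. Unset Printing Implicit Defensive.
Import Order.TTheory GRing.Theory Num.Theory.

(* Moebius function: mu 0 = 0 (convention, never used), mu n = 0 if n has a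
   square prime factor, else (-1)^(number of distinct primes). *)
Definition moebius (n : nat) : int :=
  if n == 0%N then 0%R
  else if [exists p : 'I_n.+1, prime p && (p * p %| n)%N] then 0%R
  else ((-1) ^+ size (primes n))%R.

Definition omega (n : nat) : nat := size (primes n).

From mathcomp Require Import all_boot all_order all_algebra.
From mathcomp Require Import reals zify.
Import Order.TTheory GRing.Theory Num.Theory.

Set Implicit Arguments.
Unset Strict Implicit.
Unset Printing Implicit Defensive.

(* Since floor (x / m) counts the multiples of m up to x, the left-hand side is
   the sum over k <= x of the sums of mu (n_1 ... n_r) over the r-tuples whose
   product divides k.  For fixed k only tuples with squarefree product
   contribute, and these correspond bijectively to the maps sending each prime
   factor of k to one of the r coordinates or to none.  Such a map contributes
   (-1)^(number of primes sent to a coordinate), so the inner sum factors as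
   (1 - r)^omega(k). *)

Lemma logn_prod (p : nat) (I : Type) (s : seq I) (P : pred I) (F : I -> nat) :
  (forall i, P i -> 0 < F i)%N ->
  logn p (\prod_(i <- s | P i) F i) = (\sum_(i <- s | P i) logn p (F i))%N.
Proof.
move=> F_gt0; elim: s => [|i s IHs]; first by rewrite !big_nil logn1.
rewrite !big_cons; case: ifP => // Pi.
by rewrite lognM ?IHs ?F_gt0 ?prodn_cond_gt0.
Qed.

Lemma squarefree_prod_prime_dvdn_eq (I : finType) (t : I -> nat) p i j :
  (forall i, 0 < t i)%N -> (logn p (\prod_i t i) <= 1)%N ->
  prime p -> (p %| t i)%N -> (p %| t j)%N -> i = j.
Proof.
move=> t_gt0 sqfree p_pr p_ti p_tj; apply/eqP/contraT => ij.
have logn_gt0_of x : (p %| t x)%N -> (0 < logn p (t x))%N.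
  by move=> p_tx; rewrite logn_gt0 mem_primes p_pr t_gt0.
move: sqfree; rewrite logn_prod // (bigD1 i) // (bigD1 j) /=; last by rewrite eq_sym.
by have := logn_gt0_of i p_ti; have := logn_gt0_of j p_tj; lia.
Qed.

Lemma moebius_neq0_squarefree m :
  moebius m != 0%R -> (0 < m)%N /\ (forall p, logn p m <= 1)%N.
Proof.
rewrite /moebius lt0n; case: (m =P 0%N) => //= /eqP m_neq0.
case: ifP => [//| /negbT/existsPn no_sq _].
split=> // p; rewrite leqNgt; apply/negP => lt1_logp.
have p_pr : prime p by move: lt1_logp; rewrite /logn; case: (prime p).
have p2_dvd : (p ^ 2 %| m)%N by rewrite pfactor_dvdn // lt0n.
have p_le_m : (p < m.+1)%N.
  by rewrite ltnS dvdn_leq ?lt0n // (dvdn_trans _ p2_dvd) // dvdn_exp.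
by have := no_sq (Ordinal p_le_m); rewrite /= p_pr mulnn p2_dvd.
Qed.

Lemma moebius_squarefree m :
  (0 < m)%N -> (forall p, logn p m <= 1)%N -> moebius m = ((-1) ^+ omega m)%R.
Proof.
move=> m_gt0 logn_le1; rewrite /moebius /omega eqn0Ngt m_gt0 /=.
case: existsP => // -[p /andP[p_pr]].
by rewrite mulnn pfactor_dvdn // leqNgt ltnS logn_le1.
Qed.

Section ProductsOfDistinctPrimes.

Variables (I : finType) (pr : I -> nat).
Hypotheses (pr_prime : forall i, prime (pr i)) (pr_inj : injective pr).
Implicit Type B : pred I.

Lemma prod_prime_gt0 B : (0 < \prod_(i | B i) pr i)%N.
Proof. by apply: prodn_cond_gt0 => i _; apply: prime_gt0. Qed.

Lemma logn_prod_prime q B :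
  logn q (\prod_(i | B i) pr i) = [exists i, B i && (q == pr i)].
Proof.
rewrite logn_prod => [|i _]; last exact: prime_gt0.
under eq_bigr do rewrite logn_prime //.
case: existsP => [[i /andP[Bi /eqP ->]] | no_i].
  rewrite (bigD1 i) //= eqxx big1 // => j /andP[_ ji].
  by rewrite inj_eq // eq_sym (negbTE ji).
rewrite big1 // => i Bi; case: eqP => // qi.
by case: no_i; exists i; rewrite Bi qi eqxx.
Qed.

Lemma dvdn_prod_prime i B : (pr i %| \prod_(j | B j) pr j) = B i.
Proof.
have -> : (pr i %| \prod_(j | B j) pr j) = (0 < logn (pr i) (\prod_(j | B j) pr j))%N.
  by rewrite logn_gt0 mem_primes pr_prime prod_prime_gt0.
rewrite logn_prod_prime lt0b.
by apply/existsP/idP => [[j /andP[Bj /eqP/pr_inj ->]] | Bi] //; exists i; rewrite Bi eqxx.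
Qed.

Lemma prod_prime_dvdn B m :
  (0 < m)%N -> (forall i, B i -> pr i %| m) -> (\prod_(i | B i) pr i %| m)%N.
Proof.
move=> m_gt0 dvd_m; apply/dvdn_partP => [|p]; first exact: prod_prime_gt0.
rewrite p_part -logn_gt0 logn_prod_prime lt0b => ex_i; rewrite ex_i expn1.
by case/existsP: ex_i => i /andP[Bi /eqP ->]; apply: dvd_m.
Qed.

Lemma moebius_prod_prime B : moebius (\prod_(i | B i) pr i) = ((-1) ^+ #|B|)%R.
Proof.
rewrite moebius_squarefree ?prod_prime_gt0 // => [|p]; last first.
  by rewrite logn_prod_prime leq_b1.
congr (_ ^+ _)%R; rewrite cardE -(size_map pr) /omega; apply: perm_size.
apply: uniq_perm; rewrite ?primes_uniq ?map_inj_uniq ?enum_uniq // => q.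
rewrite -logn_gt0 logn_prod_prime lt0b.
apply/existsP/mapP => [[i /andP[Bi /eqP ->]] | [i iB ->]]; exists i => //.
  by rewrite mem_enum.
by rewrite eqxx andbT; rewrite mem_enum in iB.
Qed.

End ProductsOfDistinctPrimes.

Lemma sum_ffun_option_sign (R : comPzRingType) (I J : finType) :
  (\sum_(f : {ffun I -> option J}) (-1) ^+ #|[pred i | f i != None]|
   = (1 - #|J|%:R) ^+ #|I| :> R)%R.
Proof.
under eq_bigr do rewrite -prodr_const big_mkcond /=.
rewrite -(bigA_distr_bigA (fun _ (o : option J) => if o != None then -1 else 1)%R).
rewrite prodr_const; congr (_ ^+ _)%R.
rewrite (bigD1 None) //= (reindex_omap Some id) => [|[]//].
by rewrite (eq_bigl xpredT) => [|j]; rewrite ?sumrN ?sumr_const ?eqxx.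
Qed.

Section SquarefreeTuples.

Variables (k N r : nat).
Hypotheses (k_gt0 : (0 < k)%N) (k_le_N : (k <= N)%N).

Local Notation PrimeFactor := (seq_sub (primes k)).
Local Notation Tuple := {ffun 'I_r -> 'I_N.+1}.
Local Notation Assignment := {ffun PrimeFactor -> option 'I_r}.

Lemma seq_sub_primes_prime (p : PrimeFactor) : prime (val p).
Proof. by have := valP p; rewrite mem_primes => /andP[]. Qed.

Lemma seq_sub_primes_dvdn (p : PrimeFactor) : (val p %| k)%N.
Proof. by have := valP p; rewrite mem_primes => /and3P[]. Qed.

Let logn_prod_primes := logn_prod_prime seq_sub_primes_prime val_inj.
Let dvdn_prod_primes := dvdn_prod_prime seq_sub_primes_prime val_inj.
Let prod_primes_gt0 := prod_prime_gt0 seq_sub_primes_prime.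
Let moebius_prod_primes := moebius_prod_prime seq_sub_primes_prime val_inj.

Lemma prod_primes_dvdn (B : pred PrimeFactor) : (\prod_(p | B p) val p %| k)%N.
Proof.
apply: (prod_prime_dvdn seq_sub_primes_prime val_inj) => // p _.
exact: seq_sub_primes_dvdn.
Qed.

Definition tuple_of_assignment (f : Assignment) : Tuple :=
  [ffun i => inord (\prod_(p | f p == Some i) val p)].

Definition assignment_of_tuple (t : Tuple) : Assignment :=
  [ffun p => [pick i | val p %| t i]].

Lemma tuple_of_assignmentE f i :
  tuple_of_assignment f i = \prod_(p | f p == Some i) val p :> nat.
Proof.
rewrite ffunE inordK // ltnS (leq_trans _ k_le_N) //.
by rewrite dvdn_leq // prod_primes_dvdn.
Qed.

Lemma prod_tuple_of_assignment f :
  (\prod_i tuple_of_assignment f i = \prod_(p | f p != None) val p)%N.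
Proof.
under eq_bigr do rewrite tuple_of_assignmentE.
rewrite [RHS]big_mkcond; under eq_bigr do rewrite big_mkcond.
rewrite exchange_big /=; apply: eq_bigr => p _.
case: (f p) => [i|] /=; last by rewrite big1.
rewrite (bigD1 i) //= eqxx big1 ?muln1 // => j ji.
by case: eqP => // -[ij]; rewrite ij eqxx in ji.
Qed.

Lemma assignment_of_tupleK : cancel tuple_of_assignment assignment_of_tuple.
Proof.
move=> f; apply/ffunP => p; rewrite ffunE; case: pickP => [i | none].
  by rewrite tuple_of_assignmentE dvdn_prod_primes => /eqP.
case fp: (f p) => [i|] //.
by have := none i; rewrite tuple_of_assignmentE dvdn_prod_primes fp eqxx.
Qed.

Lemma tuple_of_assignmentK (t : Tuple) :
  [forall i, 0 < t i]%N -> (\prod_i t i %| k)%N -> moebius (\prod_i t i) != 0%R ->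
  tuple_of_assignment (assignment_of_tuple t) = t.
Proof.
move=> /forallP t_gt0 prod_dvd_k /moebius_neq0_squarefree[_ sqfree].
have t_dvd_prod i : (t i %| \prod_j t j)%N by rewrite (bigD1 i) //= dvdn_mulr.
have assignmentE p i : (assignment_of_tuple t p == Some i) = (val p %| t i)%N.
  rewrite ffunE; case: pickP => [j p_tj | none]; last by rewrite none.
  apply/eqP/idP => [[<-] // | p_ti]; congr Some.
  exact: squarefree_prod_prime_dvdn_eq t_gt0 (sqfree _)
    (seq_sub_primes_prime p) p_tj p_ti.
apply/ffunP => i; apply: val_inj; rewrite /= tuple_of_assignmentE.
apply: eqn_from_log => [||q]; [exact: prod_primes_gt0 | exact: t_gt0 |].
have logn_ti_le1 : (logn q (t i) <= 1)%N.
  by apply: leq_trans (sqfree q); apply: dvdn_leq_log; rewrite ?prodn_gt0.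
have -> : logn q (t i) = (q \in primes (t i)).
  by move: logn_ti_le1; rewrite -logn_gt0; case: (logn q (t i)) => [|[]].
rewrite logn_prod_primes; congr nat_of_bool.
apply/existsP/idP => [[p /andP[]] | /[!mem_primes] /and3P[q_pr _ q_ti]].
  by rewrite assignmentE => p_ti /eqP ->; rewrite mem_primes seq_sub_primes_prime t_gt0.
have q_k : q \in primes k.
  by rewrite mem_primes q_pr k_gt0 (dvdn_trans q_ti) ?(dvdn_trans (t_dvd_prod i)).
by exists (SeqSub q_k); rewrite assignmentE /= q_ti eqxx.
Qed.

Lemma sum_moebius_prod_dvdn :
  (\sum_(t : Tuple | [forall i, 0 < t i]%N && (\prod_i t i %| k)%N)
     moebius (\prod_i t i) = (1 - r%:Z) ^+ omega k)%R.
Proof.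
rewrite (bigID (fun t : Tuple => moebius (\prod_i t i) == 0%R)) /=.
rewrite big1 ?add0r => [|t /andP[_ /eqP //]].
rewrite (reindex_onto tuple_of_assignment assignment_of_tuple); last first.
  by move=> t /andP[/andP[]]; exact: tuple_of_assignmentK.
rewrite (eq_bigl xpredT) => [|f]; last first.
  rewrite prod_tuple_of_assignment moebius_prod_primes signr_eq0 prod_primes_dvdn.
  rewrite assignment_of_tupleK eqxx !andbT.
  by apply/forallP => i; rewrite tuple_of_assignmentE prod_primes_gt0.
under eq_bigr do rewrite prod_tuple_of_assignment moebius_prod_primes.
by rewrite sum_ffun_option_sign card_ord card_seq_sub ?primes_uniq // natz.
Qed.

End SquarefreeTuples.

Local Open Scope ring_scope.

Lemma floor_divn (R : archiRealFieldType) (x : R) (m : nat) :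
  (0 < m)%N -> Num.floor (x / m%:R) = (Num.floor x %/ m)%Z.
Proof.
move=> m_gt0; have m_pos : 0 < m%:R :> R by rewrite ltr0n.
apply: floor_def; rewrite ler_pdivlMr // ltr_pdivrMr // -[m%:R]/(m%:~R) -!intrM.
rewrite (le_trans _ (floor_le x)) ?ler_int ?lez_floor -?lt0n //=.
by rewrite (lt_le_trans (floorD1_gt x)) // ler_int lezD1 ltz_ceil ?ltz_nat.
Qed.

Theorem theorem1p1 (R : realType) (r : nat) (x : R)
  (hr : (2 <= r)%N) (hx : 1 <= x) :
  let M := (`|Num.floor x|%N).+1 in
  \sum_(t : {ffun 'I_r -> 'I_M} | [forall i, (0 < (t i : nat))%N && ((t i : nat)%:R <= x)])
      moebius (\prod_(i < r) (t i : nat)) * Num.floor (x / (\prod_(i < r) (t i : nat))%:R)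
  = \sum_(n < M | (0 < n)%N && (n%:R <= x)) (1 - r%:Z) ^+ omega n.
Proof.
(* The identity holds for every r. *)
move=> M; rewrite {}/M; set N := `|Num.floor x|%N.
have floorE : Num.floor x = N%:Z.
  by rewrite /N gez0_abs // floor_ge0 (le_trans _ hx).
have le_x (k : 'I_N.+1) : k%:R <= x.
  by rewrite (le_trans _ (floor_le x)) // floorE ler_nat -ltnS.
rewrite (eq_bigl (fun t : {ffun 'I_r -> 'I_N.+1} => [forall i, 0 < t i]%N));
  last by move=> t; apply: eq_forallb => i; rewrite le_x andbT.
rewrite [RHS](eq_bigl (fun k : 'I_N.+1 => 0 < k)%N) => [|k]; last by rewrite le_x andbT.
transitivity (\sum_(t : {ffun 'I_r -> 'I_N.+1} | [forall i, 0 < t i]%N)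
    \sum_(k < N.+1 | (0 < k)%N)
      (if (\prod_i t i %| k)%N then moebius (\prod_i t i) else 0)).
  apply: eq_bigr => t /forallP t_gt0.
  rewrite floor_divn ?prodn_gt0 // floorE divz_nat divn_count_dvd big_geq_mkord /=.
  rewrite -[Posz _]intz sumMz mulr_sumr.
  by apply: eq_bigr => k _; case: ifP; rewrite ?mulr1 ?mulr0.
rewrite exchange_big /=; apply: eq_bigr => k k_gt0.
by rewrite -big_mkcondr sum_moebius_prod_dvdn // -ltnS.
Qed.
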